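(* Let $V$ be a real vector space of dimension $d>1$, $\Gamma<\mathrm{SL}(V)$ a torsion-free projective Anosov subgroup with limit maps $\xi,\xi^*$, and $\widetilde{\mathcal{M}}_\Gamma$ as in the context. Let $[v:\alpha]\in\widetilde{\mathcal{M}}_\Gamma$ and $\gamma\in\Gamma\setminus\{e\}$ be such that $\gamma\cdot[v:\alpha]=[e^Tv:e^{-T}\alpha]$ for some $T\ge0$. Then $[v]=\xi(\gamma_+)$, $[\alpha]=\xi^*(\gamma_-)$ and $T=\lambda_1(\gamma)$.
   Context: Projective Anosov: finitely generated Gromov hyperbolic, $\lambda_1(\gamma)-\lambda_2(\gamma)\ge c|\gamma|_\infty-c'$, where $\lambda_1\ge\lambda_2\ge\dots$ are the logarithms of the moduli of eigenvalues and $|\cdot|_\infty$ is stable word length. Limit maps $\xi:\partial_\infty\Gamma\to\mathbb{P}(V)$, $\xi^*:\partial_\infty\Gamma\to\mathbb{P}(V^* )$: equivariant, $\xi(x)\subset\ker\xi^*(y)$ iff $x=y$, and for infinite order $\gamma$ with attracting/repelling boundary fixed points $\gamma_\pm=\lim_{n\to\pm\infty}\gamma^n$, $\lambda_1(\gamma)>0$, the eigenvalue of modulus $e^{\lambda_1(\gamma)}$ is real and simple with eigenline $\xi(\gamma_+)$, and the eigenline of the dual action $\alpha\mapsto\alpha\circ\gamma^{-1}$ for the eigenvalue of modulus $e^{-\lambda_1(\gamma)}$ is $\xi^*(\gamma_-)$. $\mathbb{L}=\{[v:\alpha]\in\mathbb{P}(V\times V^* ):\alpha(v)>0\}$, $\gamma\cdot[v:\alpha]=[\gamma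 v:\alpha\circ\gamma^{-1}]$, and $\widetilde{\mathcal{M}}_\Gamma=\{[v:\alpha]\in\mathbb{L}:\forall x\in\partial_\infty\Gamma,\ \xi^*(x)(v)\ne0\text{ or }\alpha(\xi(x))\ne0\}$ (where $\xi^*(x)(v)\neq 0$ means a representative linear form does not vanish on $v$). *)

From HB Require Import structures.
From mathcomp Require Import all_boot all_order all_algebra.
From mathcomp Require Import all_classical all_reals all_analysis.
From mathcomp Require Import complex.
Set Implicit Arguments. Unset Strict Implicit. Unset Printing Implicit Defensive.
Import Order.TTheory GRing.Theory Num.Theory numFieldNormedType.Exports.
Local Open Scope ring_scope.
Local Open Scope classical_set_scope.

Section Defs.
Context {R : realType} {d : nat}.
Local Notation M := 'M[R]_d.

Definition SL_subgroup (G : set M) : Prop :=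
  [/\ G 1%:M,
      (forall g h, G g -> G h -> G (g *m h)),
      (forall g, G g -> G (invmx g)) &
      (forall g, G g -> \det g = 1)].

Definition mxpow (g : M) (n : nat) : M := iter n (mulmx g) 1%:M.

Definition torsion_free (G : set M) : Prop :=
  forall g, G g -> forall n, (0 < n)%N -> mxpow g n = 1%:M -> g = 1%:M.

Definition gen_letter (S : seq M) (a : M) : Prop :=
  exists2 s, s \in S & (a = s \/ a = invmx s).
Definition is_word (S : seq M) (w : seq M) : Prop :=
  forall a, a \in w -> gen_letter S a.
Definition word_prod (w : seq M) : M := foldr mulmx 1%:M w.

Definition generates (S : seq M) (G : set M) : Prop :=
  (forall s, s \in S -> G s) /\
  (forall g, G g -> exists w, is_word S w /\ word_prod w = g).

Definition wordlen (S : seq M) (g : M) : R :=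
  inf ((fun w : seq M => (size w)%:R) @` [set w | is_word S w /\ word_prod w = g]).

Definition stablen (S : seq M) (g : M) : R :=
  limn ((fun n : nat => wordlen S (mxpow g n.+1) / n.+1%:R) : R^nat).

(* Gromov product at the identity for the word metric d(g,h) = |g^{-1} h| *)
Definition gprod (S : seq M) (g h : M) : R :=
  (wordlen S g + wordlen S h - wordlen S (invmx g *m h)) / 2.

Definition gromov_hyperbolic (S : seq M) (G : set M) : Prop :=
  exists delta : R, forall x y z, G x -> G y -> G z ->
    Num.min (gprod S x y) (gprod S y z) - delta <= gprod S x z.

(* ---------- Gromov boundary: sequences converging at infinity ---------- *)
Definition conv_infty (S : seq M) (G : set M) (x : nat -> M) : Prop :=
  (forall n, G (x n)) /\
  forall K : R, exists N, forall i j, (N <= i)%N -> (N <= j)%N -> K <= gprod S (x i) (x j).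

(* two such sequences define the same boundary point *)
Definition bdry_equiv (S : seq M) (x y : nat -> M) : Prop :=
  forall K : R, exists N, forall i j, (N <= i)%N -> (N <= j)%N -> K <= gprod S (x i) (y j).

Definition cpolyC (g : M) : {poly R[i]} := char_poly (map_mx (real_complex R) g).

Definition specrad (g : M) : R :=
  sup ((@Normc.normc R) @` [set z | root (cpolyC g) z]).
Definition lam1 (g : M) : R := ln (specrad g).
(* e^{lambda_2(g)} : largest modulus after removing one eigenvalue of maximal modulus
   (eigenvalues counted with multiplicity) *)
Definition lam2 (g : M) : R :=
  ln (sup ((@Normc.normc R) @` [set z | exists z1, [/\ root (cpolyC g) z1,
             Normc.normc z1 = specrad g &
             root (cpolyC g %/ ('X - z1%:P)) z]])).

Definition proj_anosov (S : seq M) (G : set M) : Prop :=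
  gromov_hyperbolic S G /\
  exists c c' : R, 0 < c /\
    forall g, G g -> c * stablen S g - c' <= lam1 g - lam2 g.

Definition top_eig_real_simple (g : M) (mu : R) : Prop :=
  [/\ `|mu| = expR (lam1 g),
      root (cpolyC g) (real_complex R mu),
      ~~ ((('X - (real_complex R mu)%:P) ^+ 2) %| cpolyC g) &
      (forall z, root (cpolyC g) z -> Normc.normc z = expR (lam1 g) ->
                 z = real_complex R mu)].

Definition proj_eq {m n : nat} (u w : 'M[R]_(m, n)) : Prop :=
  exists2 c : R, c != 0 & u = c *: w.

(* [v : a] = [v' : a'] in P(V x V^* ) *)
Definition proj_eq_pair (p q : 'cV[R]_d * 'rV[R]_d) : Prop :=
  exists2 c : R, c != 0 & p.1 = c *: q.1 /\ p.2 = c *: q.2.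

Definition ev (a : 'rV[R]_d) (v : 'cV[R]_d) : R := (a *m v) ord0 ord0.

(* gamma^+ and gamma^- as boundary points *)
Definition attr (g : M) : nat -> M := fun n => mxpow g n.
Definition repl (g : M) : nat -> M := fun n => mxpow (invmx g) n.

Definition limit_maps (S : seq M) (G : set M)
    (xi : (nat -> M) -> 'cV[R]_d) (xis : (nat -> M) -> 'rV[R]_d) : Prop :=
  [/\ (* values are points of P(V), P(V^* ) *)
      (forall x, conv_infty S G x -> xi x != 0 /\ xis x != 0),
      (* well defined on the boundary *)
      (forall x y, conv_infty S G x -> conv_infty S G y -> bdry_equiv S x y ->
         proj_eq (xi x) (xi y) /\ proj_eq (xis x) (xis y)),
      (forall g x, G g -> conv_infty S G x ->
         proj_eq (xi (fun n => g *m x n)) (g *m xi x) /\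
         proj_eq (xis (fun n => g *m x n)) (xis x *m invmx g)),
      (forall x y, conv_infty S G x -> conv_infty S G y ->
         (ev (xis y) (xi x) = 0 <-> bdry_equiv S x y)) &
      (forall g, G g -> (forall n, (0 < n)%N -> mxpow g n != 1%:M) ->
         [/\ 0 < lam1 g,
             (exists mu : R, top_eig_real_simple g mu /\
                g *m xi (attr g) = mu *: xi (attr g)) &
             (exists nu : R, `|nu| = expR (- lam1 g) /\
                xis (repl g) *m invmx g = nu *: xis (repl g))])].

Definition in_Mtilde (S : seq M) (G : set M)
    (xi : (nat -> M) -> 'cV[R]_d) (xis : (nat -> M) -> 'rV[R]_d)
    (v : 'cV[R]_d) (a : 'rV[R]_d) : Prop :=
  0 < ev a v /\
  forall x, conv_infty S G x -> ev (xis x) v != 0 \/ ev a (xi x) != 0.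

End Defs.

From HB Require Import structures.
From mathcomp Require Import all_boot all_order all_algebra.
From mathcomp Require Import all_classical all_reals all_analysis.
From mathcomp Require Import complex.
From mathcomp Require Import zify ring lra.
Set Implicit Arguments. Unset Strict Implicit.
Import Order.TTheory GRing.Theory Num.Theory numFieldNormedType.Exports.
Local Open Scope ring_scope.
Local Open Scope classical_set_scope.

(* Since [a v > 0] is preserved, the projective relation says [g v = lam v]
   and [a g = lam a] with [|lam| = e^T >= 1].  A real eigenvalue of modulus
   [e^(lam1 g) > 1] forces the word length of [g^n] to grow linearly, so in a
   hyperbolic group [g_+] and [g_-] are points at infinity.  Test the defining
   condition of [M~] there: [xi^*(g_+)] and [xi(g_-)] are eigen(co)vectors with
   eigenvalues of modulus [< 1] for [g], resp. [> 1] for [g^-1], which cannot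
   match [lam] when [T >= 0]; the remaining alternatives pair [a] with
   [xi(g_+)] and [v] with [xi^*(g_-)], which forces [lam] to be the top
   eigenvalue of [g].  As it is simple, its eigenline and eigen-covector are
   [xi(g_+)] and [xi^*(g_-)]. *)

Section SimpleEigenvalue.
Variables (F : fieldType) (n : nat).
Implicit Types (A N : 'M[F]_n) (mu : F).

(* With [mu%:M - A = L *m pid_mx r *m U] for invertible [L], [U], the matrix
   [char_poly_mx A] is [L *m (('X - mu) *: (U *m L)^-1 + pid_mx r) *m U], and
   the last [n - r] rows of the middle factor are divisible by ['X - mu]. *)
Lemma char_poly_sqr_dvd_of_rank A mu :
  (\rank (mu%:M - A)%R + 2 <= n)%N -> ('X - mu%:P) ^+ 2 %| char_poly A.
Proof.
move=> hr; set N := mu%:M - A; set r := \rank N.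
set L := col_ebase N; set U := row_ebase N; set Y : {poly F} := 'X - mu%:P.
set C := map_mx polyC (invmx L *m invmx U).
set mid := Y *: C + pid_mx r.
have char_polyE : char_poly_mx A = map_mx polyC L *m mid *m map_mx polyC U.
  rewrite /mid mulmxDr mulmxDl -scalemxAr -scalemxAl /C -!map_mxM.
  rewrite !mulmxA mulmxV ?col_ebase_unit // mul1mx mulVmx ?row_ebase_unit //.
  rewrite -(map_pid_mx polyC) -!map_mxM mulmx_ebase map_mx1 scalemx1 /N.
  rewrite /char_poly_mx /Y map_mxB map_scalar_mx /= raddfB /=.
  by rewrite addrA addrNK.
set dv := \row_(i < n) (if (i < r)%N then 1 else Y).
set B := \matrix_(i < n, j < n) (if (i < r)%N then mid i j else C i j).
have midE : mid = diag_mx dv *m B.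
  apply/matrixP => i j; rewrite mul_diag_mx !mxE.
  by case: ifP => hi; rewrite ?mul1r // andbF addr0.
rewrite /char_poly char_polyE !det_mulmx midE det_mulmx det_diag.
apply: dvdp_mulr; apply: dvdp_mull; apply: dvdp_mulr.
have -> : \prod_(i < n) dv 0 i = \prod_(0 <= i < n) (if (i < r)%N then 1 else Y).
  by rewrite big_mkord; apply: eq_bigr => i _; rewrite mxE.
have hr2 : (r + 2 <= n)%N by exact: hr.
have hrn : (r <= n)%N by lia.
rewrite (big_cat_nat (leq0n r) hrn) /=; apply: dvdp_mull.
rewrite (eq_big_nat _ _ (F2 := fun _ => Y)); last first.
  by move=> i /andP [hi _]; rewrite ltnNge hi.
rewrite prodr_const_nat; apply: dvdp_exp2l; lia.
Qed.

Lemma mxrank_add2_of_ker_rows N (x y : 'rV_n) :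
  x *m N = 0 -> y *m N = 0 -> y != 0 -> ~~ (x <= y)%MS -> (\rank N + 2 <= n)%N.
Proof.
move=> hx hy y0 nxy.
have xy_ker : col_mx x y *m N = 0 by rewrite mul_col_mx hx hy col_mx0.
have rank_xy : (2 <= \rank (col_mx x y))%N.
  rewrite -addsmxE.
  have : (y < x + y)%MS by rewrite ltmxE addsmxSr /= addsmx_sub submx_refl andbT.
  by rewrite ltmxErank rank_rV y0 => /andP [_].
by have := mulmx0_rank_max xy_ker; lia.
Qed.

Lemma eigen_row_colinear A mu (x y : 'rV_n) :
  ~~ (('X - mu%:P) ^+ 2 %| char_poly A) ->
  x *m A = mu *: x -> y *m A = mu *: y -> y != 0 -> exists c, x = c *: y.
Proof.
move=> nd hx hy y0; have [/sub_rVP //|nxy] := boolP (x <= y)%MS.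
have ker (z : 'rV_n) : z *m A = mu *: z -> z *m (mu%:M - A) = 0.
  by move=> hz; rewrite mulmxBr mul_mx_scalar hz subrr.
have := char_poly_sqr_dvd_of_rank (mxrank_add2_of_ker_rows (ker _ hx) (ker _ hy) y0 nxy).
by rewrite (negPf nd).
Qed.

Lemma char_poly_trmx A : char_poly A^T = char_poly A.
Proof.
by rewrite /char_poly /char_poly_mx -[RHS]det_tr linearB /= tr_scalar_mx map_trmx.
Qed.

Lemma eigen_col_colinear A mu (x y : 'cV_n) :
  ~~ (('X - mu%:P) ^+ 2 %| char_poly A) ->
  A *m x = mu *: x -> A *m y = mu *: y -> y != 0 -> exists c, x = c *: y.
Proof.
move=> nd hx hy y0.
have rowE (z : 'cV_n) : A *m z = mu *: z -> z^T *m A^T = mu *: z^T.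
  by move=> hz; rewrite -trmx_mul hz linearZ.
have yT0 : y^T != 0 by rewrite -trmx0 (inj_eq trmx_inj).
rewrite -char_poly_trmx in nd.
have [c hc] := eigen_row_colinear nd (rowE _ hx) (rowE _ hy) yT0.
by exists c; rewrite -[x]trmxK hc linearZ /= trmxK.
Qed.

End SimpleEigenvalue.

Section MatrixPowers.
Variables (R : realType) (d : nat).
Implicit Types (g : 'M[R]_d) (G : set 'M[R]_d).

Lemma mxpowS g n : mxpow g n.+1 = g *m mxpow g n. Proof. by []. Qed.

Lemma mxpowD g m n : mxpow g (m + n) = mxpow g m *m mxpow g n.
Proof.
elim: m => [|m IH]; first by rewrite add0n mul1mx.
by rewrite addSn !mxpowS IH mulmxA.
Qed.

Lemma mxpowSr g n : mxpow g n.+1 = mxpow g n *m g.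
Proof. by rewrite -addn1 mxpowD; congr (_ *m _); apply: mulmx1. Qed.

Lemma mxpow_unit g n : g \in unitmx -> mxpow g n \in unitmx.
Proof.
by move=> hg; elim: n => [|n IH]; rewrite ?unitmx1 // mxpowS unitmx_mul hg IH.
Qed.

Lemma invmx_mxpow g n : g \in unitmx -> invmx (mxpow g n) = mxpow (invmx g) n.
Proof.
move=> hg; have inv_mul : mxpow (invmx g) n *m mxpow g n = 1%:M.
  elim: n => [|n IH]; first by rewrite mul1mx.
  by rewrite mxpowS mxpowSr mulmxA -(mulmxA (invmx g)) IH mulmx1 mulVmx.
by rewrite -[RHS](mulmxK (mxpow_unit n hg)) inv_mul mul1mx.
Qed.

Lemma SL_subgroup_unitmx G g : SL_subgroup G -> G g -> g \in unitmx.
Proof. by case=> _ _ _ hdet hg; rewrite unitmxE hdet ?unitr1. Qed.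

Lemma SL_subgroup_invmx G g : SL_subgroup G -> G g -> G (invmx g).
Proof. by case=> _ _ + _; apply. Qed.

Lemma SL_subgroup_mxpow G g n : SL_subgroup G -> G g -> G (mxpow g n).
Proof. by case=> h1 hM _ _ hg; elim: n => [|n IH] //; apply: hM. Qed.

Lemma torsion_free_mxpow_neq1 G g : torsion_free G -> G g -> g != 1%:M ->
  forall n, (0 < n)%N -> mxpow g n != 1%:M.
Proof. by move=> htf hg g1 n n0; apply: contra_neq g1 => e; apply: htf hg n n0 e. Qed.

End MatrixPowers.

Section WordLength.
Variables (R : realType) (d : nat).
Implicit Types (S w : seq 'M[R]_d) (G : set 'M[R]_d) (h : 'M[R]_d).

Lemma word_prod_cat w1 w2 : word_prod (w1 ++ w2) = word_prod w1 *m word_prod w2.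
Proof. by elim: w1 => [|a w IH] /=; rewrite ?mul1mx // IH mulmxA. Qed.

Lemma is_word_cat S w1 w2 : is_word S w1 -> is_word S w2 -> is_word S (w1 ++ w2).
Proof. by move=> h1 h2 a; rewrite mem_cat => /orP []; [apply: h1|apply: h2]. Qed.

Lemma is_word_pow S w n : is_word S w ->
  [/\ is_word S (iter n (cat w) [::]),
      word_prod (iter n (cat w) [::]) = mxpow (word_prod w) n &
      size (iter n (cat w) [::]) = (n * size w)%N].
Proof.
move=> hw; elim: n => [|n [IH1 IH2 IH3]] /=; first by split => // a; rewrite in_nil.
by rewrite word_prod_cat IH2 size_cat IH3 mulSn; split; first exact: is_word_cat.
Qed.

Lemma wordlen_le_size S h w :
  is_word S w -> word_prod w = h -> wordlen S h <= (size w)%:R.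
Proof.
move=> hw hp; apply: ge_inf; last by exists w.
by exists 0 => x [w' _ <-].
Qed.

Lemma wordlen_ge S G h x : generates S G -> G h ->
  (forall w, is_word S w -> word_prod w = h -> x <= (size w)%:R) -> x <= wordlen S h.
Proof.
move=> [_ hgen] hh hx; apply: lb_le_inf; last by move=> y [w [hw hp] <-]; apply: hx.
by have [w [hw hp]] := hgen h hh; exists (size w)%:R, w.
Qed.

Lemma wordlen_mxpow_le S G h : generates S G -> G h ->
  exists2 L : R, 0 <= L & forall n, wordlen S (mxpow h n) <= L * n%:R.
Proof.
move=> [_ hgen] hh; have [w [hw <-]] := hgen h hh.
exists (size w)%:R => // n; have [hwn hpn hsn] := is_word_pow n hw.
by apply: le_trans (wordlen_le_size hwn hpn) _; rewrite hsn natrM mulrC.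
Qed.

Definition row_norm1 (r : 'rV[R]_d) : R := \sum_j `|r 0 j|.
Definition mx_norm1 (B : 'M[R]_d) : R := \sum_i \sum_j `|B i j|.

Lemma row_norm1_ge0 r : 0 <= row_norm1 r.
Proof. by apply: sumr_ge0 => j _. Qed.

Lemma mx_norm1_ge0 B : 0 <= mx_norm1 B.
Proof. by apply: sumr_ge0 => i _; apply: sumr_ge0. Qed.

Lemma row_norm1Z c r : row_norm1 (c *: r) = `|c| * row_norm1 r.
Proof. by rewrite /row_norm1 mulr_sumr; apply: eq_bigr => j _; rewrite mxE normrM. Qed.

Lemma row_norm1_gt0 r : r != 0 -> 0 < row_norm1 r.
Proof.
move=> r0; have [j hj] : exists j, r 0 j != 0.
  apply/existsP; apply: contraR r0 => /existsPn h.
  by apply/eqP/rowP => j; rewrite mxE; apply/eqP; have := h j; rewrite negbK.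
rewrite /row_norm1 (bigD1 j) //=; apply: lt_le_trans (_ : `|r 0 j| <= _).
  by rewrite normr_gt0.
by rewrite lerDl; apply: sumr_ge0.
Qed.

Lemma row_norm1_mul r B : row_norm1 (r *m B) <= mx_norm1 B * row_norm1 r.
Proof.
rewrite /row_norm1 /mx_norm1.
apply: le_trans (_ : _ <= \sum_j \sum_i `|r 0 i| * `|B i j|) _.
  apply: ler_sum => j _; rewrite mxE; apply: le_trans (ler_norm_sum _ _ _) _.
  by apply: ler_sum => i _; rewrite normrM.
rewrite exchange_big /= mulr_sumr; apply: ler_sum => i _.
rewrite -mulr_sumr mulrC ler_wpM2r //.
rewrite [leRHS](bigD1 i) //= lerDl; apply: sumr_ge0 => i' _.
by apply: sumr_ge0.
Qed.

(* The summand 2 keeps the bound above 1, so that its logarithm is positive. *)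
Definition letter_bound S : R := 2 + \sum_(s <- S) (mx_norm1 s + mx_norm1 (invmx s)).

Lemma letter_bound_ge2 S : 2 <= letter_bound S.
Proof.
by rewrite lerDl; apply: sumr_ge0 => s _; rewrite addr_ge0 ?mx_norm1_ge0.
Qed.

Lemma mx_norm1_letter S a : gen_letter S a -> mx_norm1 a <= letter_bound S.
Proof.
move=> [s hs ha]; rewrite /letter_bound (big_rem s hs) /=.
have h1 := mx_norm1_ge0 s; have h2 := mx_norm1_ge0 (invmx s).
have h3 : 0 <= \sum_(x <- rem s S) (mx_norm1 x + mx_norm1 (invmx x)).
  by apply: sumr_ge0 => x _; rewrite addr_ge0 ?mx_norm1_ge0.
by case: ha => ->; lra.
Qed.

Lemma row_norm1_word_prod S w r : is_word S w ->
  row_norm1 (r *m word_prod w) <= letter_bound S ^+ size w * row_norm1 r.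
Proof.
elim: w r => [|a w IH] r hw /=; first by rewrite mulmx1 expr0 mul1r.
rewrite mulmxA exprSr -mulrA.
have hw' : is_word S w by move=> x hx; apply: hw; rewrite inE hx orbT.
apply: le_trans (IH _ hw') _; rewrite ler_wpM2l ?exprn_ge0 //.
  exact: le_trans (letter_bound_ge2 S).
apply: le_trans (row_norm1_mul r a) _; rewrite ler_wpM2r ?row_norm1_ge0 //.
by apply: mx_norm1_letter; apply: hw; apply: mem_head.
Qed.

(* Along a word of length [k] representing [h ^ n] the norm of [r] grows at
   most like [letter_bound S ^ k], while [r *m h ^ n = mu ^ n *: r]. *)
Lemma wordlen_mxpow_ge S G h mu (r : 'rV[R]_d) :
  generates S G -> SL_subgroup G -> G h -> r != 0 -> r *m h = mu *: r -> 1 < `|mu| ->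
  exists2 eps : R, 0 < eps & forall n, eps * n%:R <= wordlen S (mxpow h n).
Proof.
move=> hgen hSL hh r0 hr hmu.
have C1 : 1 < letter_bound S by apply: lt_le_trans (letter_bound_ge2 S); rewrite ltr1n.
have C0 : 0 < letter_bound S by apply: lt_trans C1.
have mu0 : 0 < `|mu| by apply: lt_trans hmu.
exists (ln `|mu| / ln (letter_bound S)); first by rewrite divr_gt0 ?ln_gt0.
move=> n; apply: (wordlen_ge hgen (SL_subgroup_mxpow n hSL hh)) => w hw hp.
have r_mxpow k : r *m mxpow h k = mu ^+ k *: r.
  elim: k => [|k IH]; first by rewrite mulmx1 scale1r.
  by rewrite mxpowSr mulmxA IH -scalemxAl hr scalerA exprSr.
have := row_norm1_word_prod r hw.
rewrite hp r_mxpow row_norm1Z normrX ler_pM2r ?row_norm1_gt0 // => hle.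
have : ln (`|mu| ^+ n) <= ln (letter_bound S ^+ size w).
  by rewrite ler_ln ?posrE ?exprn_gt0.
rewrite (lnXn n mu0) (lnXn (size w) C0) -[_ *+ n]mulr_natr -[_ *+ size w]mulr_natr => hl.
by rewrite mulrAC ler_pdivrMr ?ln_gt0 // (mulrC (size w)%:R).
Qed.

End WordLength.

Lemma nat_mul_gt (R : archiRealFieldType) (eps x : R) :
  0 < eps -> exists n : nat, x < eps * n%:R.
Proof.
move=> eps0; exists (Num.truncn (x / eps)).+1.
by rewrite mulrC -ltr_pdivrMr //; apply: truncnS_gt.
Qed.

(* [F k l] stands for the Gromov product of the [k]-th and [l]-th points of a
   sequence in a [delta]-hyperbolic space.  Chaining through intermediate
   points at spacing [s] costs [delta] per step but gains [eps * s > delta]. *)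
Section HyperbolicSequence.
Variables (R : realType) (F : nat -> nat -> R) (delta eps L : R).
Hypotheses (F_hyp : forall a b c, Num.min (F a b) (F b c) - delta <= F a c)
  (eps_gt0 : 0 < eps) (L_ge0 : 0 <= L)
  (F_ge : forall k l, eps * (minn k l)%:R - L * (k - l + (l - k))%N%:R <= F k l).

Lemma hyperbolic_gprod_diverges :
  forall K : R, exists N, forall i j, (N <= i)%N -> (N <= j)%N -> K <= F i j.
Proof.
have [s hs] := nat_mul_gt `|delta| eps_gt0.
have s_gt0 : (0 < s)%N.
  by rewrite lt0n; apply: contraTneq hs => ->; rewrite mulr0 -leNgt normr_ge0.
have near k l : (k - l + (l - k) <= s)%N -> eps * (minn k l)%:R - L * s%:R <= F k l.
  by move=> hkl; apply: le_trans (F_ge k l); rewrite lerB // ler_wpM2l // ler_nat.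
pose B := `|delta| + L * s%:R.
have hdelta := ler_norm delta; have hdelta0 := normr_ge0 delta.
have far m k l : (k - l + (l - k) <= m)%N -> eps * (minn k l)%:R - B <= F k l.
  elim: m k l => [|m IH] k l hm.
    by apply: le_trans (near k l _); [rewrite /B; lra | lia].
  have [/near|hkl] := leqP (k - l + (l - k)) s; first by rewrite /B; lra.
  have [kl|lk] := leqP k l.
    apply: le_trans (F_hyp k (k + s) l); rewrite lerBrDr le_min.
    have := near k (k + s) ltac:(lia); have := IH (k + s)%N l ltac:(lia).
    have -> : minn k (k + s) = k by lia.
    have -> : minn (k + s) l = (k + s)%N by lia.
    by rewrite natrD /B => h_far h_near; apply/andP; split; lra.
  apply: le_trans (F_hyp k (l + s) l); rewrite lerBrDr le_min.
  have := IH k (l + s)%N ltac:(lia); have := near (l + s)%N l ltac:(lia).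
  have -> : minn (l + s) l = l by lia.
  have -> : minn k (l + s) = (l + s)%N by lia.
  by rewrite natrD /B => h_near h_far; apply/andP; split; lra.
move=> K; have [N hN] := nat_mul_gt (K + B) eps_gt0.
exists N => i j hi hj; apply: le_trans (far _ i j (leqnn _)).
have : eps * N%:R <= eps * (minn i j)%:R by rewrite ler_wpM2l ?ler_nat ?leq_min ?hi ?ltW.
lra.
Qed.

End HyperbolicSequence.

Section PowersAtInfinity.
Variables (R : realType) (d : nat) (S : seq 'M[R]_d) (G : set 'M[R]_d).
Hypotheses (hSL : SL_subgroup G) (hgen : generates S G).

Lemma wordlen_mxpow_dist_le h : G h ->
  exists2 L : R, 0 <= L & forall k l,
    wordlen S (invmx (mxpow h k) *m mxpow h l) <= L * (k - l + (l - k))%N%:R.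
Proof.
move=> hh; have hu := SL_subgroup_unitmx hSL hh.
have [L1 L1_ge0 hL1] := wordlen_mxpow_le hgen hh.
have [L2 L2_ge0 hL2] := wordlen_mxpow_le hgen (SL_subgroup_invmx hSL hh).
exists (L1 + L2) => [|k l]; first exact: addr_ge0.
have [kl|lk] := leqP k l.
  have -> : (k - l + (l - k) = l - k)%N by lia.
  rewrite -{1}(subnKC kl) mxpowD mulKmx ?mxpow_unit //.
  by apply: le_trans (hL1 _) _; rewrite ler_wpM2r // lerDl.
have -> : (k - l + (l - k) = k - l)%N by lia.
rewrite invmx_mxpow // -{1}(subnK (ltnW lk)) mxpowD -mulmxA -(invmx_mxpow l hu).
rewrite mulVmx ?mxpow_unit // mulmx1.
by apply: le_trans (hL2 _) _; rewrite ler_wpM2r // lerDr.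
Qed.

Lemma conv_infty_mxpow h : gromov_hyperbolic S G -> G h ->
  (exists2 eps : R, 0 < eps & forall n, eps * n%:R <= wordlen S (mxpow h n)) ->
  conv_infty S G (attr h).
Proof.
move=> [delta hd] hh [eps eps_gt0 he]; have [L L_ge0 hL] := wordlen_mxpow_dist_le hh.
split=> [n|]; first exact: SL_subgroup_mxpow.
apply: (@hyperbolic_gprod_diverges _ _ delta eps (L / 2)) => // [a b c||k l].
- by apply: hd; apply: SL_subgroup_mxpow.
- by rewrite divr_ge0.
have eps_ge0 := ltW eps_gt0.
have hk : eps * (minn k l)%:R <= eps * k%:R by rewrite ler_wpM2l ?ler_nat ?geq_minl.
have hl : eps * (minn k l)%:R <= eps * l%:R by rewrite ler_wpM2l ?ler_nat ?geq_minr.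
by have := he k; have := he l; have := hL k l; rewrite /gprod; lra.
Qed.

Lemma top_eig_row h mu :
  top_eig_real_simple h mu -> exists2 r : 'rV[R]_d, r *m h = mu *: r & r != 0.
Proof.
case=> _ hroot _ _; apply/eigenvalueP; rewrite eigenvalue_root_char.
by rewrite -(fmorph_root (real_complex R)) map_char_poly.
Qed.

Lemma conv_infty_top_eig h mu : gromov_hyperbolic S G -> G h ->
  top_eig_real_simple h mu -> 0 < lam1 h -> conv_infty S G (attr h).
Proof.
move=> hhyp hh htop lam_gt0; apply: conv_infty_mxpow => //.
have [r hr r0] := top_eig_row htop.
apply: wordlen_mxpow_ge hgen hSL hh r0 hr _.
by case: htop => -> _ _ _; rewrite expR_gt1.
Qed.

End PowersAtInfinity.

Lemma top_eig_sqr_ndvd (R : realType) d (h : 'M[R]_d) mu :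
  top_eig_real_simple h mu -> ~~ (('X - mu%:P) ^+ 2 %| char_poly h).
Proof.
case=> _ _ hnd _.
by rewrite -(dvdp_map (real_complex R)) rmorphXn /= map_polyXsubC map_char_poly.
Qed.

Lemma proj_eq_colinear (R : realType) m n (u w : 'M[R]_(m, n)) c :
  u != 0 -> u = c *: w -> proj_eq u w.
Proof.
by move=> u0 uE; exists c => //; apply: contraNneq u0 => c0; rewrite uE c0 scale0r.
Qed.

Lemma invmx_neq1 (R : comUnitRingType) n (g : 'M[R]_n) : g != 1%:M -> invmx g != 1%:M.
Proof. by apply: contraNneq => e; rewrite -[g]invmxK e invmx1. Qed.

Lemma row_eigen_invmx (R : fieldType) n (g : 'M[R]_n) (b : 'rV_n) lam :
  g \in unitmx -> lam != 0 -> b *m g = lam *: b -> b *m invmx g = lam^-1 *: b.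
Proof. by move=> hg lam0 hb; rewrite -{1}[b](scalerK lam0) -hb -scalemxAl mulmxK. Qed.

Section Pairing.
Variables (R : realType) (d : nat).
Implicit Types (b : 'rV[R]_d) (v : 'cV[R]_d).

Lemma evZl c b v : ev (c *: b) v = c * ev b v.
Proof. by rewrite /ev -scalemxAl mxE. Qed.

Lemma evZr c b v : ev b (c *: v) = c * ev b v.
Proof. by rewrite /ev -scalemxAr mxE. Qed.

Lemma ev_neq0 b v : ev b v != 0 -> b != 0 /\ v != 0.
Proof.
move=> h; split; apply: contraNneq h => ->.
  by rewrite /ev mul0mx mxE.
by rewrite /ev mulmx0 mxE.
Qed.

Lemma ev_eigen_eq (A : 'M[R]_d) b v x y :
  b *m A = x *: b -> A *m v = y *: v -> ev b v != 0 -> x = y.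
Proof.
move=> hb hv h0; apply: (mulIf h0).
by rewrite -evZl -evZr -hb -hv /ev mulmxA.
Qed.

Lemma proj_eq_pair_eigen v (a : 'rV[R]_d) (g : 'M[R]_d) T :
  0 < ev a v -> g \in unitmx ->
  proj_eq_pair (g *m v, a *m invmx g) (expR T *: v, expR (- T) *: a) ->
  exists2 lam, `|lam| = expR T & g *m v = lam *: v /\ a *m g = lam *: a.
Proof.
move=> av hg [c c0 [/= gv ag]]; rewrite scalerA in gv; rewrite scalerA in ag.
have expRT0 : expR T != 0 by rewrite gt_eqF ?expR_gt0.
have c2 : c * c = 1.
  have : ev (a *m invmx g) (g *m v) = ev a v by rewrite /ev mulmxA mulmxKV.
  rewrite ag gv !evZl !evZr expRN => E.
  by apply: (mulIf (lt0r_neq0 av)); rewrite mul1r -[RHS]E; field.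
have c_norm : `|c| = 1.
  by apply/eqP; rewrite -sqrp_eq1 // -normrX expr2 c2 normr1.
exists (c * expR T); first by rewrite normrM c_norm mul1r gtr0_norm ?expR_gt0.
split=> //.
have cT0 : c * expR (- T) != 0 by rewrite mulf_neq0 // gt_eqF ?expR_gt0.
rewrite -[g]invmxK (row_eigen_invmx _ cT0 ag) ?unitmx_inv //.
by rewrite invfM expRN invrK -[c^-1]mul1r -c2 mulfK.
Qed.

End Pairing.

Section LimitMaps.
Variables (R : realType) (d : nat) (S : seq 'M[R]_d) (G : set 'M[R]_d)
  (xi : (nat -> 'M[R]_d) -> 'cV[R]_d) (xis : (nat -> 'M[R]_d) -> 'rV[R]_d).
Hypotheses (hSL : SL_subgroup G) (hgen : generates S G) (hhyp : gromov_hyperbolic S G)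
  (htf : torsion_free G) (hlim : limit_maps S G xi xis).

Lemma limit_maps_dynamics g : G g -> g != 1%:M ->
  [/\ 0 < lam1 g,
      (exists2 mu, top_eig_real_simple g mu & g *m xi (attr g) = mu *: xi (attr g)) &
      (exists2 nu, `|nu| = expR (- lam1 g) &
                   xis (repl g) *m invmx g = nu *: xis (repl g))].
Proof.
move=> hg g1; case: hlim => _ _ _ _ /(_ g hg (torsion_free_mxpow_neq1 htf hg g1)).
by case=> ? [mu [? ?]] [nu [? ?]]; split=> //; [exists mu | exists nu].
Qed.

Lemma conv_infty_attr g : G g -> g != 1%:M -> conv_infty S G (attr g).
Proof.
move=> hg g1; have [lam_gt0 [mu htop _] _] := limit_maps_dynamics hg g1.
exact: (conv_infty_top_eig hSL hgen hhyp hg htop lam_gt0).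
Qed.

Lemma limit_maps_attr_neq0 g : G g -> g != 1%:M ->
  xi (attr g) != 0 /\ xis (attr g) != 0.
Proof. by move=> hg g1; case: hlim => + _ _ _ _; apply; apply: conv_infty_attr. Qed.

Variables (v : 'cV[R]_d) (a : 'rV[R]_d) (g : 'M[R]_d) (lam : R).
Hypotheses (hM : in_Mtilde S G xi xis v a) (hg : G g) (g1 : g != 1%:M)
  (gv : g *m v = lam *: v) (ag : a *m g = lam *: a).

(* [g_+] is the repelling point of [g^-1], so [xi^*(g_+)] is an eigen-covector
   of [g] with eigenvalue of modulus [< 1] and cannot pair with [v]. *)
Lemma in_Mtilde_attr : 1 <= `|lam| ->
  top_eig_real_simple g lam /\ proj_eq v (xi (attr g)).
Proof.
move=> lam_ge1.
have hgi := SL_subgroup_invmx hSL hg; have gi1 := invmx_neq1 g1.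
have [_ [mu htop xi_eig] _] := limit_maps_dynamics hg g1.
have [lamgi_gt0 _ [nu nu_abs]] := limit_maps_dynamics hgi gi1.
rewrite /repl invmxK -/(attr g) => xis_eig.
have lam_mu : lam = mu.
  have [hne|hne] := hM.2 _ (conv_infty_attr hg g1); last first.
    exact: ev_eigen_eq ag xi_eig hne.
  have nu_lam := ev_eigen_eq xis_eig gv hne.
  have : `|nu| < 1 by rewrite nu_abs expR_lt1 oppr_lt0.
  by rewrite nu_lam ltNge lam_ge1.
rewrite -lam_mu in htop xi_eig; split=> //.
have [_ v0] := ev_neq0 (lt0r_neq0 hM.1).
have [xi0 _] := limit_maps_attr_neq0 hg g1.
have [c vE] := eigen_col_colinear (top_eig_sqr_ndvd htop) gv xi_eig xi0.
exact: proj_eq_colinear v0 vE.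
Qed.

(* [g_-] is the attracting point of [g^-1], so [xi(g_-)] is an eigenvector of
   [g^-1] with eigenvalue of modulus [> 1] and cannot pair with [a]. *)
Lemma in_Mtilde_repl : top_eig_real_simple g lam -> proj_eq a (xis (repl g)).
Proof.
move=> htop.
have hgi := SL_subgroup_invmx hSL hg; have gi1 := invmx_neq1 g1.
have [lam_gt0 _ [nu nu_abs xis_eig]] := limit_maps_dynamics hg g1.
have [lamgi_gt0 [mu htopi xi_eig] _] := limit_maps_dynamics hgi gi1.
have lam_gt1 : 1 < `|lam| by case: htop => -> _ _ _; rewrite expR_gt1.
have lam0 : lam != 0 by rewrite -normr_gt0 (lt_trans ltr01 lam_gt1).
have [hne|hne] := hM.2 _ (conv_infty_attr hgi gi1); last first.
  have agi := row_eigen_invmx (SL_subgroup_unitmx hSL hg) lam0 ag.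
  have mu_lam := ev_eigen_eq agi xi_eig hne.
  have : 1 < `|mu| by case: htopi => -> _ _ _; rewrite expR_gt1.
  by rewrite -mu_lam normfV invf_gt1 ?normr_gt0 // ltNge (ltW lam_gt1).
have nu0 : nu != 0 by rewrite -normr_eq0 nu_abs gt_eqF ?expR_gt0.
have xis_g : xis (repl g) *m g = nu^-1 *: xis (repl g).
  rewrite -[g in _ *m g]invmxK; apply: row_eigen_invmx nu0 xis_eig.
  by rewrite unitmx_inv (SL_subgroup_unitmx hSL hg).
have nu_lam := ev_eigen_eq xis_g gv hne; rewrite nu_lam in xis_g.
have [a0 _] := ev_neq0 (lt0r_neq0 hM.1).
have [_ xis0] := limit_maps_attr_neq0 hgi gi1.
have [c aE] := eigen_row_colinear (top_eig_sqr_ndvd htop) ag xis_g xis0.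
exact: proj_eq_colinear a0 aE.
Qed.

End LimitMaps.

Theorem lemma3p5 (R : realType) (d : nat) (G : set 'M[R]_d) (S : seq 'M[R]_d)
  (xi : (nat -> 'M[R]_d) -> 'cV[R]_d) (xis : (nat -> 'M[R]_d) -> 'rV[R]_d)
  (v : 'cV[R]_d) (a : 'rV[R]_d) (g : 'M[R]_d) (T : R) :
  (1 < d)%N ->
  SL_subgroup G -> generates S G -> torsion_free G -> proj_anosov S G ->
  limit_maps S G xi xis ->
  in_Mtilde S G xi xis v a ->
  G g -> g != 1%:M -> 0 <= T ->
  proj_eq_pair (g *m v, a *m invmx g) (expR T *: v, expR (- T) *: a) ->
  [/\ proj_eq v (xi (attr g)), proj_eq a (xis (repl g)) & T = lam1 g].
Proof.
move=> _ hSL hgen htf [hhyp _] hlim hM hg g1 T_ge0 hpe.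
have [lam lam_T [gv ag]] := proj_eq_pair_eigen hM.1 (SL_subgroup_unitmx hSL hg) hpe.
have lam_ge1 : 1 <= `|lam|.
  by rewrite lam_T; apply: le_trans (expR_ge1Dx T); rewrite lerDl.
have [htop hv] := in_Mtilde_attr hSL hgen hhyp htf hlim hM hg g1 gv ag lam_ge1.
split=> //; first exact: (in_Mtilde_repl hSL hgen hhyp htf hlim hM hg g1 gv ag htop).
by case: htop; rewrite lam_T => /expR_inj.
Qed.
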